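(* Let $L \subset \mathbb{P}^r$ be a line, $H \subset \mathbb{P}^r$ a hyperplane transverse to $L$, and $R \subset H$ a rational normal curve (of degree $r-1$ in $H$). Let $V \subset H^0(\mathcal{I}_{L\cup R}(2))$ be a nonzero linear series of quadrics containing $L \cup R$. Assume (a) no element of $V$ is a reducible quadric containing $H$, and (b) a general element $Q_{\mathrm{gen}}$ of $V$ satisfies $L \not\subset \mathrm{Sing}\, Q_{\mathrm{gen}}$. Then for general choices of $p \in L$ and $q \in R$, letting $L_{\mathrm{gen}} := \overline{pq}$ be the line through them: (i) $L_{\mathrm{gen}}$ is not contained in $Q_{\mathrm{gen}}$; (ii) among the quadrics $Q \in V$ containing $L_{\mathrm{gen}}$, a general one does not contain $L_{\mathrm{gen}}$ in its singular locus.
   Context: Work over an algebraically closed field of characteristic $0$. $\mathcal{I}_{L\cup R}$ denotes the ideal sheaf of $L \cup R$ in $\mathbb{P}^r$; elements of $H^0(\mathcal{I}_{L\cup R}(2))$ are identified (up to scalar) with quadric hypersurfaces containing $L\cup R$. *)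

From HB Require Import structures.
From mathcomp Require Import all_boot all_order all_algebra.
From mathcomp Require Import mpoly.
Set Implicit Arguments. Unset Strict Implicit. Unset Printing Implicit Defensive.
Import Order.TTheory GRing.Theory.
Local Open Scope ring_scope.

(* Conventions: P^r = projectivisation of k^(r+1); points are represented by
   (nonzero) row vectors 'rV[k]_(r.+1); quadrics are homogeneous degree-2
   polynomials in r+1 variables (elements of {mpoly k[r.+1]}).            *)

Section Defs.
Variable k : fieldType.

Definition pt n (x : 'rV[k]_n) : 'I_n -> k := fun i => x ord0 i.
Definition ev n (Q : {mpoly k[n]}) (x : 'rV[k]_n) : k := Q.@[pt x].

Definition contains_line n (Q : {mpoly k[n]}) (u v : 'rV[k]_n) :=
  forall a b : k, ev Q (a *: u + b *: v) = 0.

Definition sing_contains_line n (Q : {mpoly k[n]}) (u v : 'rV[k]_n) :=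
  forall (a b : k) (i : 'I_n), ev (Q^`M(i)) (a *: u + b *: v) = 0.

Definition inH n (h x : 'rV[k]_n) : bool := x *m h^T == 0.

(* rational normal curve of degree r-1 in H, parametrised by P^1:
   [s:t] |-> sum_{i<r} s^(r-1-i) t^i w_i, (w_i) a basis of H *)
Definition rnc_pt r (w : 'I_r -> 'rV[k]_(r.+1)) (s t : k) : 'rV[k]_(r.+1) :=
  \sum_(i < r) (s ^+ (r.-1 - i) * t ^+ i) *: w i.

Definition reducible_containing_H n (h : 'rV[k]_n) (Q : {mpoly k[n]}) :=
  (exists l1 l2 : {mpoly k[n]},
      l1 \is 1.-homog /\ l2 \is 1.-homog /\ Q = l1 * l2)
  /\ (forall x, inH h x -> ev Q x = 0).

Definition qV n d (B : 'I_d -> {mpoly k[n]}) (c : 'I_d -> k) : {mpoly k[n]} :=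
  \sum_(i < d) c i *: B i.

(* "a general (nonzero) element c of the linear subspace W of k^m satisfies P":
   there is a polynomial f not vanishing identically on W such that every
   nonzero c in W with f(c) <> 0 satisfies P.  (W is irreducible, so this is
   "P holds on a nonempty Zariski open subset of P(W)".) *)
Definition generic_in m (W : ('I_m -> k) -> Prop) (P : ('I_m -> k) -> Prop) :=
  exists f : {mpoly k[m]},
    (exists c, W c /\ f.@[c] != 0) /\
    (forall c, W c -> (exists i, c i != 0) -> f.@[c] != 0 -> P c).

(* parameters e = (a, b, s, t) in k^4 for p = a u + b v in L and
   q = gamma(s, t) in R *)
Definition p_of n (u v : 'rV[k]_n) (e : 'I_4 -> k) : 'rV[k]_n :=
  e (inord 0) *: u + e (inord 1) *: v.
Definition q_of r (w : 'I_r -> 'rV[k]_(r.+1)) (e : 'I_4 -> k) :=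
  rnc_pt w (e (inord 2)) (e (inord 3)).

End Defs.

(* Every Q in V vanishes on L and R, so for p in L and q in R the line pq lies
   on Q = sum_i c_i B_i iff the polar form b_Q(p, q) = sum_i c_i b_{B_i}(p, q)
   vanishes: a linear condition on c whose coefficients are polynomial in the
   parameters of p and q. Some b_{B_i}(p, q) is not identically zero, for
   otherwise the gradient of every Q at a point of L would vanish on R, which
   spans H, and on L, which is transverse to H, so that L would lie in Sing Q,
   against (b); this gives (i). For (ii), if every minor
   b_{B_i}(p,q) d_m B_j(z) - b_{B_j}(p,q) d_m B_i(z), z in {p, q}, vanished
   identically, then B_j - lam B_i would have zero gradient at a point of L off
   H and along R, hence would be zero in characteristic 0. A nonzero minor
   gives a quadric through pq with d_m Q(z) <> 0, and all the open conditions
   on (p, q) hold together since k is infinite. *)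

From HB Require Import structures.
From mathcomp Require Import all_boot all_order all_algebra.
From mathcomp Require Import mpoly.
From mathcomp Require Import ring.
From Stdlib Require Import Classical.
Set Implicit Arguments. Unset Strict Implicit. Unset Printing Implicit Defensive.
Import GRing.Theory.
Local Open Scope ring_scope.

Section HomogeneousPolynomials.
Variable k : fieldType.

Lemma dhomog_ind n d (P : {mpoly k[n]} -> Prop) :
  P 0 -> (forall p q, P p -> P q -> P (p + q)) ->
  (forall c p, P p -> P (c *: p)) ->
  (forall m, mdeg m = d -> P 'X_[m]) -> forall Q, Q \is d.-homog -> P Q.
Proof.
move=> P0 PD PZ PX Q /dhomogP hQ; rewrite (mpolyE Q) big_seq.
by apply: (big_ind P) => // m /hQ hm; apply/PZ/PX.
Qed.

Lemma mnm1_le n (m : 'X_{1..n}) i : (0 < m i)%N -> (U_(i) <= m)%MM.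
Proof. by move=> hi; apply/mnm_lepP => l; rewrite mnm1E; case: eqP => [<-|]. Qed.

Lemma mdegS_subU n d (m : 'X_{1..n}) : mdeg m = d.+1 ->
  exists2 i, (0 < m i)%N & mdeg (m - U_(i))%MM = d.
Proof.
move=> hm; have [i hi] : exists i, (0 < m i)%N.
  apply/existsP; apply: contraT; rewrite negb_exists => /forallP h0.
  by move: hm; rewrite mdegE big1 // => i _; move: (h0 i); rewrite lt0n negbK => /eqP.
exists i => //; move: hm; rewrite -{1}(submK (mnm1_le hi)) mdegD mdeg1 addn1.
by case.
Qed.

Lemma mdeg2_addU n (m : 'X_{1..n}) : mdeg m = 2%N ->
  exists i j, m = (U_(i) + U_(j))%MM.
Proof.
case/mdegS_subU=> i hi /eqP/mdeg1P [j /eqP hj]; exists j, i.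
by rewrite -hj submK // mnm1_le.
Qed.

Lemma sum_delta n (i : 'I_n) (F : 'I_n -> k) : \sum_j (i == j)%:R * F j = F i.
Proof.
rewrite (bigD1 i) //= eqxx mul1r big1 ?addr0 // => j hj.
by rewrite eq_sym (negbTE hj) mul0r.
Qed.

Lemma meval_dhomog1 n (P : {mpoly k[n]}) : P \is 1.-homog ->
  forall x, P.@[x] = \sum_j x j * P@_U_(j).
Proof.
move: P; apply: dhomog_ind.
- by move=> x; rewrite meval0 big1 // => j _; rewrite mcoeff0 mulr0.
- move=> p q hp hq x; rewrite mevalD hp hq -big_split /=.
  by apply: eq_bigr => j _; rewrite mcoeffD mulrDr.
- move=> c p hp x; rewrite mevalZ hp mulr_sumr; apply: eq_bigr => j _.
  by rewrite mcoeffZ mulrCA.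
- move=> m /eqP/mdeg1P [i /eqP ->] x; rewrite mevalXU -[LHS](sum_delta i x).
  by apply: eq_bigr => j _; rewrite mcoeffX eq_mnm1 mulrC.
Qed.

Lemma dhomog1_eq0 n (P : {mpoly k[n]}) : P \is 1.-homog ->
  (forall j, P@_U_(j) = 0) -> P = 0.
Proof.
move=> /dhomogP hP h0; apply/mpolyP => m; rewrite mcoeff0.
case: (boolP (m \in msupp P)) => [/hP/eqP/mdeg1P [j /eqP ->]|]; first exact: h0.
by rewrite -mcoeff_eq0 => /eqP.
Qed.

Lemma meval_dhomogZ n d (Q : {mpoly k[n]}) : Q \is d.-homog ->
  forall a x, Q.@[fun i => a * x i] = a ^+ d * Q.@[x].
Proof.
move: Q; apply: dhomog_ind.
- by move=> a x; rewrite !meval0 mulr0.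
- by move=> p q hp hq a x; rewrite !mevalD hp hq mulrDr.
- by move=> c p hp a x; rewrite !mevalZ hp mulrCA.
- move=> m hm a x; rewrite !mevalX -hm mdegE -prodrXr -big_split /=.
  by apply: eq_bigr => i _; rewrite exprMn.
Qed.

Lemma mderivXU n (i l : 'I_n) : ('X_i : {mpoly k[n]})^`M(l) = (i == l)%:R%:MP.
Proof.
rewrite mderivX mnm1E; case: eqP => [<-|_]; last by rewrite scale0r.
by rewrite -{1}(add0m U_(i)%MM) addmK mpolyX0 scale1r.
Qed.

Lemma mderiv_dhomog n d (Q : {mpoly k[n]}) l :
  Q \is d.+1.-homog -> Q^`M(l) \is d.-homog.
Proof.
move: Q; apply: dhomog_ind.
- by rewrite mderiv0 dhomog0.
- by move=> p q hp hq; rewrite mderivD dhomogD.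
- by move=> c p hp; rewrite mderivZ dhomogZ.
- move=> m hm; rewrite mderivX; have [->|hl] := posnP (m l).
    by rewrite scale0r dhomog0.
  apply: dhomogZ; rewrite dhomogX; apply/eqP.
  by move: hm; rewrite -{1}(submK (mnm1_le hl)) mdegD mdeg1 addn1; case.
Qed.

Lemma meval_dhomog2D n (Q : {mpoly k[n]}) : Q \is 2.-homog -> forall x y,
  Q.@[fun i => x i + y i] = Q.@[x] + \sum_l (Q^`M(l)).@[x] * y l + Q.@[y].
Proof.
move: Q; apply: dhomog_ind.
- by move=> x y; rewrite !meval0 big1 ?addr0 // => l _; rewrite mderiv0 meval0 mul0r.
- move=> p q hp hq x y; rewrite !mevalD hp hq.
  under [X in _ = _ + X + _]eq_bigr do rewrite mderivD mevalD mulrDl.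
  by rewrite big_split /=; ring.
- move=> c p hp x y; rewrite !mevalZ hp.
  under [X in _ = _ + X + _]eq_bigr do rewrite mderivZ mevalZ -mulrA.
  by rewrite -mulr_sumr; ring.
- move=> m /mdeg2_addU [i [j ->]] x y; rewrite mpolyXD.
  under eq_bigr do rewrite mderivM !mderivXU !mevalD !mevalM !mevalXU !mevalC mulrDl.
  rewrite big_split /= !mevalM !mevalXU.
  rewrite (eq_bigr (fun l => (i == l)%:R * (x j * y l))); last by move=> l _; ring.
  rewrite [X in _ = _ + (_ + X) + _](eq_bigr (fun l => (j == l)%:R * (x i * y l))).
    by rewrite !sum_delta; ring.
  by move=> l _; ring.
Qed.

Lemma dhomog_mderiv_eq0 n d (Q : {mpoly k[n]}) : [pchar k] =i pred0 ->
  Q \is d.+1.-homog -> (forall l, Q^`M(l) = 0) -> Q = 0.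
Proof.
move=> char0 /dhomogP hQ h0; apply/mpolyP => m; rewrite mcoeff0.
case: (boolP (m \in msupp Q)) => [/hQ /mdegS_subU [i hi _]|]; last first.
  by rewrite -mcoeff_eq0 => /eqP.
have /eqP := congr1 (mcoeff (m - U_(i))%MM) (h0 i).
rewrite mcoeff_mderiv mcoeff0 submK ?mnm1_le // -mulr_natr mulf_eq0.
by move/pcharf0P: char0 => ->; rewrite orbF => /eqP.
Qed.

End HomogeneousPolynomials.

Section PolynomialFunctions.
Variable k : closedFieldType.

Definition polyfun n (g : ('I_n -> k) -> k) :=
  exists f : {mpoly k[n]}, forall e, f.@[e] = g e.

Definition nonvanishing n (g : ('I_n -> k) -> k) := exists e, g e != 0.

Lemma eq_polyfun n (g1 g2 : ('I_n -> k) -> k) : g1 =1 g2 -> polyfun g1 -> polyfun g2.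
Proof. by move=> eg [f hf]; exists f => e; rewrite hf eg. Qed.

Lemma polyfun_cst n c : polyfun (fun _ : 'I_n -> k => c).
Proof. by exists c%:MP => e; rewrite mevalC. Qed.

Lemma polyfun_coord n (i : 'I_n) : polyfun (fun e => e i).
Proof. by exists 'X_i => e; rewrite mevalXU. Qed.

Lemma polyfunD n (g1 g2 : ('I_n -> k) -> k) :
  polyfun g1 -> polyfun g2 -> polyfun (fun e => g1 e + g2 e).
Proof. by move=> [f1 h1] [f2 h2]; exists (f1 + f2) => e; rewrite mevalD h1 h2. Qed.

Lemma polyfunM n (g1 g2 : ('I_n -> k) -> k) :
  polyfun g1 -> polyfun g2 -> polyfun (fun e => g1 e * g2 e).
Proof. by move=> [f1 h1] [f2 h2]; exists (f1 * f2) => e; rewrite mevalM h1 h2. Qed.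

Lemma polyfunB n (g1 g2 : ('I_n -> k) -> k) :
  polyfun g1 -> polyfun g2 -> polyfun (fun e => g1 e - g2 e).
Proof. by move=> [f1 h1] [f2 h2]; exists (f1 - f2) => e; rewrite mevalB h1 h2. Qed.

Lemma polyfunX n (g : ('I_n -> k) -> k) i : polyfun g -> polyfun (fun e => g e ^+ i).
Proof. by move=> [f hf]; exists (f ^+ i) => e; rewrite rmorphXn /= hf. Qed.

Lemma polyfun_comp n N (Q : {mpoly k[N]}) (G : 'I_N -> ('I_n -> k) -> k) :
  (forall j, polyfun (G j)) -> polyfun (fun e => Q.@[fun j => G j e]).
Proof.
move=> hG; have [F hF] := fin_all_exists hG.
exists (Q \mPo [tuple F j | j < N]) => e; rewrite comp_mpoly_meval.
by apply: meval_eq => j; rewrite tnth_mktuple hF.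
Qed.

Lemma polyfun_sum n m (G : 'I_m -> ('I_n -> k) -> k) :
  (forall j, polyfun (G j)) -> polyfun (fun e => \sum_j G j e).
Proof.
move=> /(polyfun_comp (\sum_(j < m) 'X_j)); apply: eq_polyfun => e /=.
by rewrite raddf_sum; apply: eq_bigr => j _; apply: mevalXU.
Qed.

Lemma polyfun_lin n (a : 'I_n -> k) : polyfun (fun c => \sum_i c i * a i).
Proof.
by apply: polyfun_sum => i; apply: polyfunM; [apply: polyfun_coord | apply: polyfun_cst].
Qed.

Lemma meval_along_poly N (f : {mpoly k[N]}) (P_ : 'I_N -> {poly k}) :
  exists P : {poly k}, forall t, P.[t] = f.@[fun j => (P_ j).[t]].
Proof.
elim/mpolyind: f => [|c m p _ _ [Pp hP]].
  by exists 0 => t; rewrite meval0 horner0.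
exists (c%:P * \prod_j (P_ j) ^+ (m j) + Pp) => t.
rewrite hornerD hornerCM horner_prod mevalD mevalZ mevalX hP.
by congr (_ * _ + _); apply: eq_bigr => j _; rewrite horner_exp.
Qed.

(* Restrict both polynomials to the line through two witnesses; on a closed field a
   nonzero univariate polynomial has a nonroot. *)
Lemma nonvanishingM n (g1 g2 : ('I_n -> k) -> k) : polyfun g1 -> polyfun g2 ->
  nonvanishing g1 -> nonvanishing g2 -> nonvanishing (fun e => g1 e * g2 e).
Proof.
move=> [f1 h1] [f2 h2] [e1 he1] [e2 he2].
pose line i : {poly k} := (e1 i)%:P + 'X * (e2 i - e1 i)%:P.
have [P1 hP1] := meval_along_poly f1 line.
have [P2 hP2] := meval_along_poly f2 line.
have line0 : (fun i => (line i).[0]) =1 e1.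
  by move=> i; rewrite /line !hornerE.
have line1 : (fun i => (line i).[1]) =1 e2.
  by move=> i; rewrite /line hornerD hornerC hornerM hornerX hornerC mul1r addrC subrK.
have P1n : P1 != 0.
  by apply: contraNneq he1 => P0; rewrite -h1 -(meval_eq _ line0) -hP1 P0 horner0.
have P2n : P2 != 0.
  by apply: contraNneq he2 => P0; rewrite -h2 -(meval_eq _ line1) -hP2 P0 horner0.
have /closed_nonrootP [t ht] : P1 * P2 != 0 by rewrite mulf_neq0.
by exists (fun i => (line i).[t]); rewrite -h1 -h2 -hP1 -hP2 -hornerM.
Qed.

Definition nonzero_polyfun n (g : ('I_n -> k) -> k) := polyfun g /\ nonvanishing g.

Lemma nonzero_polyfunM n (g1 g2 : ('I_n -> k) -> k) :
  nonzero_polyfun g1 -> nonzero_polyfun g2 -> nonzero_polyfun (fun e => g1 e * g2 e).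
Proof. by move=> [p1 n1] [p2 n2]; split; [apply: polyfunM | apply: nonvanishingM]. Qed.

Lemma generic_in_polyfun n (G : ('I_n -> k) -> k) (P : ('I_n -> k) -> Prop) :
  nonzero_polyfun G -> (forall e, G e != 0 -> P e) -> generic_in (fun _ => True) P.
Proof.
move=> [[f hf] [e0 he0]] hP; exists f; split; first by exists e0; rewrite hf.
by move=> e _ _; rewrite hf; apply: hP.
Qed.

Lemma generic_in_witness d (P : ('I_d -> k) -> Prop) : (0 < d)%N ->
  generic_in (fun _ => True) P -> exists2 c, exists i, c i != 0 & P c.
Proof.
move=> d_gt0 [f [[c0 [_ hc0]] hP]].
have [c] : nonvanishing (fun c => f.@[c] * c (Ordinal d_gt0)).
  apply: nonvanishingM; [by exists f | exact: polyfun_coord | by exists c0 |].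
  by exists (fun _ => 1); rewrite oner_neq0.
rewrite mulf_eq0 negb_or => /andP [hfc hcd].
have nz_c : exists i, c i != 0 by exists (Ordinal d_gt0).
by exists c => //; apply: hP.
Qed.

Definition poly_of_coefs r (a : 'I_r -> k) : {poly k} := \sum_(i < r) (a i)%:P * 'X^i.

Lemma horner_coefs r (a : 'I_r -> k) t :
  (poly_of_coefs a).[t] = \sum_(i < r) t ^+ i * a i.
Proof.
rewrite horner_sum; apply: eq_bigr => i _.
by rewrite hornerCM hornerXn mulrC.
Qed.

Lemma poly_of_coefs_eq0 r (a : 'I_r -> k) : poly_of_coefs a = 0 -> forall i, a i = 0.
Proof.
move=> a0 i; have := congr1 (fun p : {poly k} => p`_i) a0.
rewrite /= coef0 coef_sum (bigD1 i) //= coefCM coefXn eqxx mulr1 big1 ?addr0 //.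
by move=> j ji; rewrite coefCM coefXn (inj_eq val_inj) eq_sym (negbTE ji) mulr0.
Qed.

Lemma poly_eq0_of_roots (p : {poly k}) : (forall t, p.[t] = 0) -> p = 0.
Proof.
move=> p0; apply/eqP; apply: contraT => /closed_nonrootP [t].
by rewrite /root p0 eqxx.
Qed.

Lemma sum_powers_eq0 r (a : 'I_r -> k) :
  (forall t, \sum_(i < r) t ^+ i * a i = 0) -> forall i, a i = 0.
Proof.
by move=> h; apply/poly_of_coefs_eq0/poly_eq0_of_roots => t; rewrite horner_coefs.
Qed.

Lemma sum_powersM_eq0 r (a b : 'I_r -> k) :
  (forall t, (\sum_(i < r) t ^+ i * a i) * (\sum_(i < r) t ^+ i * b i) = 0) ->
  (forall i, a i = 0) \/ (forall i, b i = 0).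
Proof.
move=> h; have /eqP : poly_of_coefs a * poly_of_coefs b = 0.
  by apply: poly_eq0_of_roots => t; rewrite hornerM !horner_coefs.
by rewrite mulf_eq0 => /orP [] /eqP/poly_of_coefs_eq0; [left | right].
Qed.

End PolynomialFunctions.

Section HyperplaneLinearAlgebra.
Variable k : fieldType.

Lemma row_free_col_mx_off_hyperplane m n (A : 'M[k]_(m, n)) (z h : 'rV[k]_n) :
  row_free A -> A *m h^T = 0 -> z *m h^T != 0 -> row_free (col_mx z A).
Proof.
move=> fA Ah zh; apply: inj_row_free => x.
rewrite -[x]hsubmxK mul_row_col => hx.
have lx0 : lsubmx x = 0.
  have := congr1 (mulmx^~ h^T) hx; rewrite /= mulmxDl mul0mx -!mulmxA Ah mulmx0 addr0.
  move/matrixP/(_ 0 0); rewrite !mxE big_ord1 => /eqP; rewrite mulf_eq0.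
  case/orP=> [/eqP l0|/eqP zh0]; first by apply/matrixP => i j; rewrite !ord1 l0 mxE.
  by case/eqP: zh; apply/matrixP => i j; rewrite !ord1 zh0 mxE.
move: hx; rewrite lx0 mul0mx add0r => hr.
have -> : rsubmx x = 0 by apply: (row_free_inj fA); rewrite hr mul0mx.
by rewrite row_mx0.
Qed.

Lemma linear_form_eq0 r (W : 'M[k]_(r, r.+1)) (h z : 'rV[k]_(r.+1)) (g : 'I_(r.+1) -> k) :
  row_free W -> W *m h^T = 0 -> z *m h^T != 0 ->
  (forall i, \sum_l W i l * g l = 0) -> \sum_l z 0 l * g l = 0 ->
  forall l, g l = 0.
Proof.
move=> fW Wh zh hW hz l.
have uA : (col_mx z W : 'M_(r.+1)) \in unitmx.
  by rewrite -row_free_unit; exact: (row_free_col_mx_off_hyperplane fW Wh zh).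
pose G := \col_l g l.
have AG0 : col_mx z W *m G = 0.
  rewrite mul_col_mx; apply/matrixP => i j; rewrite !mxE.
  case: splitP => i' _; rewrite !mxE.
    by rewrite ord1 -[RHS]hz; apply: eq_bigr => l' _; rewrite mxE.
  by rewrite -[RHS](hW i'); apply: eq_bigr => l' _; rewrite mxE.
have : G = 0 by rewrite -(mulKmx uA G) AG0 mulmx0.
by move/matrixP/(_ l 0); rewrite !mxE.
Qed.

Lemma rank_col_mx_off_hyperplane n (p q h : 'rV[k]_n) :
  p *m h^T != 0 -> q *m h^T = 0 -> q != 0 -> \rank (col_mx p q) = 2%N.
Proof.
move=> ph qh q0; apply/eqP; apply: (row_free_col_mx_off_hyperplane _ qh ph).
by rewrite /row_free eqn_leq rank_leq_row lt0n mxrank_eq0.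
Qed.

End HyperplaneLinearAlgebra.

Section QuadricsOnRowVectors.
Variables (k : fieldType) (n : nat).
Implicit Types (Q : {mpoly k[n]}) (x y : 'rV[k]_n).

Definition polar Q x y := \sum_l ev (Q^`M(l)) x * y 0 l.

Lemma ev_polarD Q x y : Q \is 2.-homog ->
  ev Q (x + y) = ev Q x + polar Q x y + ev Q y.
Proof.
by move=> hQ; rewrite /ev -meval_dhomog2D //; apply: meval_eq => i; rewrite /pt mxE.
Qed.

Lemma ev_quadZ Q a x : Q \is 2.-homog -> ev Q (a *: x) = a ^+ 2 * ev Q x.
Proof.
by move=> hQ; rewrite /ev -meval_dhomogZ //; apply: meval_eq => i; rewrite /pt mxE.
Qed.

Lemma ev_mderiv Q l x : Q \is 2.-homog ->
  ev (Q^`M(l)) x = \sum_j x 0 j * (Q^`M(l))@_U_(j).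
Proof. by move=> hQ; rewrite /ev meval_dhomog1 // mderiv_dhomog. Qed.

Lemma ev_mderivZ Q l a x : Q \is 2.-homog ->
  ev (Q^`M(l)) (a *: x) = a * ev (Q^`M(l)) x.
Proof.
move=> hQ; rewrite !ev_mderiv // mulr_sumr; apply: eq_bigr => j _.
by rewrite mxE mulrA.
Qed.

Lemma ev_mderiv_sum Q l m (c : 'I_m -> k) (z : 'I_m -> 'rV[k]_n) :
  Q \is 2.-homog ->
  ev (Q^`M(l)) (\sum_i c i *: z i) = \sum_i c i * ev (Q^`M(l)) (z i).
Proof.
move=> hQ; rewrite ev_mderiv //; under eq_bigr do rewrite summxE mulr_suml.
rewrite exchange_big /=; apply: eq_bigr => i _; rewrite ev_mderiv // mulr_sumr.
by apply: eq_bigr => j _; rewrite mxE mulrA.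
Qed.

Lemma polarZl Q a x y : Q \is 2.-homog -> polar Q (a *: x) y = a * polar Q x y.
Proof.
move=> hQ; rewrite /polar mulr_sumr.
by apply: eq_bigr => l _; rewrite ev_mderivZ // mulrA.
Qed.

Lemma polarZr Q a x y : polar Q x (a *: y) = a * polar Q x y.
Proof.
by rewrite /polar mulr_sumr; apply: eq_bigr => l _; rewrite mxE mulrCA.
Qed.

Lemma polar_sumr Q x m (c : 'I_m -> k) (z : 'I_m -> 'rV[k]_n) :
  polar Q x (\sum_i c i *: z i) = \sum_i c i * polar Q x (z i).
Proof.
rewrite /polar; under eq_bigr do rewrite summxE mulr_sumr.
rewrite exchange_big /=; apply: eq_bigr => i _; rewrite mulr_sumr.
by apply: eq_bigr => l _; rewrite mxE mulrCA.
Qed.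

Lemma ev_line Q a b x y : Q \is 2.-homog ->
  ev Q (a *: x + b *: y) =
  a ^+ 2 * ev Q x + a * b * polar Q x y + b ^+ 2 * ev Q y.
Proof.
by move=> hQ; rewrite ev_polarD // !ev_quadZ // polarZl // polarZr mulrA.
Qed.

Lemma contains_lineP Q x y : Q \is 2.-homog ->
  contains_line Q x y <-> [/\ ev Q x = 0, ev Q y = 0 & polar Q x y = 0].
Proof.
move=> hQ; split=> [hc|[x0 y0 xy0] a b]; last by rewrite ev_line // x0 y0 xy0; ring.
have x0 : ev Q x = 0 by have := hc 1 0; rewrite scale1r scale0r addr0.
have y0 : ev Q y = 0 by have := hc 0 1; rewrite scale1r scale0r add0r.
by split=> //; have := hc 1 1; rewrite !scale1r ev_polarD // x0 y0 add0r addr0.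
Qed.

Section LinearSeries.
Variables (d : nat) (B : 'I_d -> {mpoly k[n]}).

Lemma qV_dhomog c : (forall i, B i \is 2.-homog) -> qV B c \is 2.-homog.
Proof.
move=> hB; apply: (big_ind (fun p => p \is 2.-homog)) => [|p q|i _].
- exact: dhomog0.
- exact: dhomogD.
- exact: dhomogZ.
Qed.

Lemma ev_qV c x : ev (qV B c) x = \sum_i c i * ev (B i) x.
Proof. by rewrite /ev /qV raddf_sum; apply: eq_bigr => i _; apply: mevalZ. Qed.

Lemma ev_mderiv_qV c l x :
  ev ((qV B c)^`M(l)) x = \sum_i c i * ev ((B i)^`M(l)) x.
Proof.
have -> : (qV B c)^`M(l) = \sum_i c i *: (B i)^`M(l).
  by rewrite raddf_sum; apply: eq_bigr => i _; apply: mderivZ.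
by rewrite /ev raddf_sum; apply: eq_bigr => i _; apply: mevalZ.
Qed.

Lemma polar_qV c x y : polar (qV B c) x y = \sum_i c i * polar (B i) x y.
Proof.
rewrite /polar; under eq_bigr do rewrite ev_mderiv_qV mulr_suml.
rewrite exchange_big; apply: eq_bigr => i _; rewrite mulr_sumr.
by apply: eq_bigr => l _; rewrite mulrA.
Qed.

End LinearSeries.

End QuadricsOnRowVectors.

Section LineThroughLandR.
Variable k : closedFieldType.
Hypothesis char0 : [pchar k] =i pred0.
Variable r : nat.
Hypothesis r_gt0 : (0 < r)%N.
Variables u v h : 'rV[k]_(r.+1).
Hypothesis htr : ~~ (inH h u && inH h v).
Variable w : 'I_r -> 'rV[k]_(r.+1).
Hypothesis hw : row_free (\matrix_(i < r) w i).
Hypothesis hwH : forall i, inH h (w i).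
Variables (d : nat) (B : 'I_d -> {mpoly k[r.+1]}).
Hypothesis hB2 : forall i, B i \is 2.-homog.
Hypothesis hBL : forall i, contains_line (B i) u v.
Hypothesis hBR : forall i (s t : k), ev (B i) (rnc_pt w s t) = 0.
Hypothesis hd : (0 < d)%N.
Hypothesis hBfree : forall c : 'I_d -> k, qV B c = 0 -> forall i, c i = 0.
Hypothesis hb : generic_in (fun _ => True)
  (fun c : 'I_d -> k => ~ sing_contains_line (qV B c) u v).

Definition param (a b s t : k) : 'I_4 -> k := fun i => nth 0 [:: a; b; s; t] i.

Lemma p_of_param a b s t : p_of u v (param a b s t) = a *: u + b *: v.
Proof. by rewrite /p_of /param !inordK. Qed.

Lemma q_of_param a b s t : q_of w (param a b s t) = rnc_pt w s t.
Proof. by rewrite /q_of /param !inordK. Qed.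

Lemma rnc_pt1 t : rnc_pt w 1 t = \sum_(i < r) t ^+ i *: w i.
Proof. by apply: eq_bigr => i _; rewrite expr1n mul1r. Qed.

Lemma rnc_basis_inH : (\matrix_(i < r) w i) *m h^T = 0.
Proof. by apply/row_matrixP => i; rewrite row_mul rowK row0; apply/eqP/hwH. Qed.

Lemma q_of_inH e : q_of w e *m h^T = 0.
Proof.
rewrite mulmx_suml big1 // => i _.
by rewrite -scalemxAl (eqP (hwH i)) scaler0.
Qed.

Lemma q_of_neq0 e : e (inord 2) != 0 -> q_of w e != 0.
Proof.
move=> s0; apply: contraNneq s0 => q0.
pose c := \row_(i < r) (e (inord 2) ^+ (r.-1 - i) * e (inord 3) ^+ i).
have : c *m (\matrix_(i < r) w i) = 0 *m (\matrix_(i < r) w i).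
  rewrite mul0mx -q0 mulmx_sum_row; apply: eq_bigr => i _.
  by rewrite rowK mxE.
move/(row_free_inj hw)/matrixP/(_ 0 (Ordinal r_gt0)).
by rewrite !mxE subn0 expr0 mulr1 => /eqP; rewrite expf_eq0 => /andP [_ ->].
Qed.

Lemma ev_qV_L c a b : ev (qV B c) (a *: u + b *: v) = 0.
Proof. by rewrite ev_qV big1 // => i _; rewrite hBL mulr0. Qed.

Lemma ev_qV_R c s t : ev (qV B c) (rnc_pt w s t) = 0.
Proof. by rewrite ev_qV big1 // => i _; rewrite hBR mulr0. Qed.

Definition p_offH e := (p_of u v e *m h^T) 0 0.

Lemma p_offH_neq0 e : p_offH e != 0 -> p_of u v e *m h^T != 0.
Proof. by apply: contraNneq; rewrite /p_offH => ->; rewrite mxE. Qed.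

Lemma nonvanishing_p_offH : nonvanishing p_offH.
Proof.
have mx11_neq0 (A : 'M[k]_1) : A != 0 -> A 0 0 != 0.
  by apply: contraNneq => A0; apply/eqP/matrixP => i j; rewrite !ord1 A0 mxE.
case/nandP: htr => [uH|vH].
  by exists (param 1 0 0 0); rewrite /p_offH p_of_param scale1r scale0r addr0 mx11_neq0.
by exists (param 0 1 0 0); rewrite /p_offH p_of_param scale1r scale0r add0r mx11_neq0.
Qed.

Lemma polyfun_p_of l : polyfun (fun e => p_of u v e 0 l).
Proof.
apply: (@eq_polyfun _ _ (fun e => e (inord 0) * u 0 l + e (inord 1) * v 0 l)).
  by move=> e; rewrite !mxE.
by apply: polyfunD; apply: polyfunM; apply: polyfun_coord || apply: polyfun_cst.
Qed.

Lemma polyfun_q_of l : polyfun (fun e => q_of w e 0 l).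
Proof.
apply: (@eq_polyfun _ _
  (fun e => \sum_(i < r) e (inord 2) ^+ (r.-1 - i) * e (inord 3) ^+ i * w i 0 l)).
  by move=> e; rewrite summxE; apply: eq_bigr => i _; rewrite mxE.
apply: polyfun_sum => i; apply: polyfunM; last exact: polyfun_cst.
by apply: polyfunM; apply/polyfunX/polyfun_coord.
Qed.

Lemma polyfun_p_offH : polyfun p_offH.
Proof.
apply: (@eq_polyfun _ _ (fun e => \sum_l p_of u v e 0 l * h 0 l)).
  by move=> e; rewrite /p_offH [RHS]mxE; apply: eq_bigr => l _; rewrite [h^T _ _]mxE.
by apply: polyfun_sum => l; apply: polyfunM; [apply: polyfun_p_of | apply: polyfun_cst].
Qed.

Lemma polyfun_ev (x : ('I_4 -> k) -> 'rV[k]_(r.+1)) (Q : {mpoly k[r.+1]}) :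
  (forall j, polyfun (fun e => x e 0 j)) -> polyfun (fun e => ev Q (x e)).
Proof. by move=> /(polyfun_comp Q); apply: eq_polyfun. Qed.

Definition pq_polar i e := polar (B i) (p_of u v e) (q_of w e).

Lemma polyfun_pq_polar i : polyfun (pq_polar i).
Proof.
apply: polyfun_sum => l; apply: polyfunM; last exact: polyfun_q_of.
by apply/polyfun_ev/polyfun_p_of.
Qed.

Lemma contains_pq_line c e :
  contains_line (qV B c) (p_of u v e) (q_of w e) <-> \sum_i c i * pq_polar i e = 0.
Proof.
rewrite contains_lineP ?qV_dhomog // polar_qV; split=> [[] //|pq0].
by split=> //; [apply: ev_qV_L | apply: ev_qV_R].
Qed.

(* The polar form at a point of L vanishes on R, which spans H, and on L, which
   is not contained in H, so the whole gradient vanishes there. *)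
Lemma sing_line_of_pq_polar_eq0 c :
  (forall i e, pq_polar i e = 0) -> sing_contains_line (qV B c) u v.
Proof.
move=> pq0 a b l; set Q := qV B c; set x := a *: u + b *: v.
have hQ : Q \is 2.-homog by apply: qV_dhomog.
have polar_w i : polar Q x (w i) = 0.
  apply: (@sum_powers_eq0 _ r (fun i => polar Q x (w i))) => t.
  rewrite -polar_sumr -rnc_pt1 /x -(p_of_param a b 1 t) -(q_of_param a b 1 t).
  by rewrite polar_qV big1 // => j _; rewrite [polar _ _ _]pq0 mulr0.
have [e0 pH] := nonvanishing_p_offH.
have polar_L : polar Q x (p_of u v e0) = 0.
  have := ev_polarD x (p_of u v e0) hQ.
  by rewrite /p_of /x addrACA -!scalerDl !ev_qV_L add0r addr0.
apply: (linear_form_eq0 (g := fun l => ev (Q^`M(l)) x) hw rnc_basis_inH (p_offH_neq0 pH)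
  _ _ l) => [i|].
  by rewrite -[RHS](polar_w i); apply: eq_bigr => l' _; rewrite mxE mulrC.
by rewrite -[RHS]polar_L; apply: eq_bigr => l' _; rewrite mulrC.
Qed.

Lemma exists_pq_polar_neq0 : exists i0, nonvanishing (pq_polar i0).
Proof.
have [c _ not_sing] := generic_in_witness hd hb.
apply: NNPP => none; apply/not_sing/sing_line_of_pq_polar_eq0 => i e.
by apply/eqP; apply: contraT => pq_neq0; case: none; exists i, e.
Qed.

Lemma part_i i0 e : pq_polar i0 e != 0 ->
  generic_in (fun _ => True)
    (fun c => ~ contains_line (qV B c) (p_of u v e) (q_of w e)).
Proof.
move=> pq_neq0; have [f hf] := polyfun_lin (fun i => pq_polar i e).
exists f; split.
  exists (fun i => (i0 == i)%:R); split=> //.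
  by rewrite hf sum_delta.
by move=> c _ _ + /contains_pq_line pq0; rewrite hf pq0 eqxx.
Qed.

Definition comb2 (a b : k) (j i0 : 'I_d) : 'I_d -> k :=
  fun i => a * (i == j)%:R - b * (i == i0)%:R.

Lemma sum_comb2 a b j i0 (F : 'I_d -> k) :
  \sum_i comb2 a b j i0 i * F i = a * F j - b * F i0.
Proof.
under eq_bigr => i _ do rewrite mulrBl -!mulrA (eq_sym i) (eq_sym i i0).
by rewrite sumrB -!mulr_sumr !sum_delta.
Qed.

Definition pq_pt (sel : bool) e := if sel then p_of u v e else q_of w e.

Definition pq_minor i0 j sel m e :=
  pq_polar i0 e * ev ((B j)^`M(m)) (pq_pt sel e)
  - pq_polar j e * ev ((B i0)^`M(m)) (pq_pt sel e).

Lemma polyfun_pq_minor i0 j sel m : polyfun (pq_minor i0 j sel m).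
Proof.
have polyfun_pt l : polyfun (fun e => pq_pt sel e 0 l).
  by case: sel; [apply: polyfun_p_of | apply: polyfun_q_of].
by apply: polyfunB; apply: polyfunM; apply: polyfun_pq_polar || apply: polyfun_ev.
Qed.

Lemma quadric_eq0_of_grad (D : {mpoly k[r.+1]}) z :
  D \is 2.-homog -> z *m h^T != 0 ->
  (forall m, ev (D^`M(m)) z = 0) -> (forall m i, ev (D^`M(m)) (w i) = 0) -> D = 0.
Proof.
move=> hD zH dz dw; apply: (dhomog_mderiv_eq0 char0 hD) => m.
apply: dhomog1_eq0 => [|l]; first exact: mderiv_dhomog.
apply: (linear_form_eq0 (g := fun l => (D^`M(m))@_U_(l)) hw rnc_basis_inH zH _ _ l) => [i|].
  by rewrite -[RHS](dw m i) ev_mderiv //; apply: eq_bigr => l' _; rewrite mxE.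
by rewrite -[RHS](dz m) ev_mderiv.
Qed.

(* If all minors vanish, [B j - lam B i0] has zero gradient at a point of L off H
   (where the polar forms are proportional) and along R. *)
Lemma pq_minors_eq0_dependent i0 j e0 :
  pq_polar i0 e0 != 0 -> p_offH e0 != 0 ->
  (forall sel m e, pq_minor i0 j sel m e = 0) ->
  qV B (comb2 1 (pq_polar j e0 / pq_polar i0 e0) j i0) = 0.
Proof.
move=> pq_neq0 pH minor0.
set lam := _ / _; set D := qV B _; set p0 := p_of u v e0.
have hD : D \is 2.-homog by apply: qV_dhomog.
have dD m x : ev (D^`M(m)) x = ev ((B j)^`M(m)) x - lam * ev ((B i0)^`M(m)) x.
  by rewrite ev_mderiv_qV sum_comb2 mul1r.
have dD_p0 m : ev (D^`M(m)) p0 = 0.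
  apply: (mulfI pq_neq0); rewrite mulr0 dD mulrBr mulrA [_ * lam]mulrC /lam divfK //.
  exact: (minor0 true m e0).
pose e_ t := param (e0 (inord 0)) (e0 (inord 1)) 1 t.
have p_of_e t : p_of u v (e_ t) = p0 by rewrite p_of_param.
have pq_polar_j t : pq_polar j (e_ t) = lam * pq_polar i0 (e_ t).
  apply/eqP; rewrite -subr_eq0 -[pq_polar j _]mul1r.
  rewrite -(sum_comb2 _ _ _ _ (pq_polar^~ (e_ t))) /pq_polar -polar_qV p_of_e.
  by rewrite /polar big1 // => l _; rewrite dD_p0 mul0r.
have minor_R m t : pq_polar i0 (e_ t) * ev (D^`M(m)) (rnc_pt w 1 t) = 0.
  have := minor0 false m (e_ t); rewrite /pq_minor /= q_of_param pq_polar_j.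
  by rewrite dD mulrBr mulrA [_ * lam]mulrC.
have dD_R m i : ev (D^`M(m)) (w i) = 0.
  have : (forall i, polar (B i0) p0 (w i) = 0) \/ (forall i, ev (D^`M(m)) (w i) = 0).
    apply: sum_powersM_eq0 => t.
    rewrite -polar_sumr -ev_mderiv_sum // -rnc_pt1 -(minor_R m t).
    by rewrite /pq_polar p_of_e q_of_param.
  case=> [pw0|->//]; case/negP: pq_neq0.
  by rewrite /pq_polar /q_of /rnc_pt polar_sumr big1 // => i' _; rewrite pw0 mulr0.
exact: (quadric_eq0_of_grad hD (p_offH_neq0 pH) dD_p0 dD_R).
Qed.

Lemma exists_pq_minor_neq0 i0 j : j != i0 -> nonvanishing (pq_polar i0) ->
  exists sel m, nonvanishing (pq_minor i0 j sel m).
Proof.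
move=> ji nv_i0.
have [e0] := nonvanishingM polyfun_p_offH (polyfun_pq_polar i0) nonvanishing_p_offH nv_i0.
rewrite mulf_eq0 negb_or => /andP [pH pq_neq0].
apply: NNPP => none.
have minor0 sel m e : pq_minor i0 j sel m e = 0.
  by apply/eqP; apply: contraT => minor_neq0; case: none; exists sel, m, e.
have := hBfree (pq_minors_eq0_dependent pq_neq0 pH minor0) j.
by rewrite /comb2 eqxx (negbTE ji) mulr1 mulr0 subr0 => /eqP; rewrite oner_eq0.
Qed.

(* The quadrics through pq form the kernel of [c |-> sum_i c i * pq_polar i e];
   a nonzero minor exhibits an element of that kernel whose [m]-th partial
   derivative does not vanish at [p] or at [q]. *)
Lemma part_ii_of_minor i0 j sel m e : pq_minor i0 j sel m e != 0 ->
  generic_in (fun c => contains_line (qV B c) (p_of u v e) (q_of w e))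
    (fun c => ~ sing_contains_line (qV B c) (p_of u v e) (q_of w e)).
Proof.
move=> minor_neq0.
have [f hf] := polyfun_lin (fun i => ev ((B i)^`M(m)) (pq_pt sel e)).
exists f; split.
  exists (comb2 (pq_polar i0 e) (pq_polar j e) j i0); split.
    by apply/contains_pq_line; rewrite sum_comb2 mulrC subrr.
  by rewrite hf sum_comb2.
move=> c _ _; rewrite hf -ev_mderiv_qV => /eqP + sing; apply.
case: {minor_neq0 hf} sel => /=.
- by have := sing 1 0 m; rewrite scale1r scale0r addr0.
- by have := sing 0 1 m; rewrite scale1r scale0r add0r.
Qed.

(* If V has dimension one, no nonzero quadric of V contains pq, so (ii) holds
   vacuously. *)
Lemma part_ii_of_single i0 e : (forall j, j = i0) -> pq_polar i0 e != 0 ->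
  generic_in (fun c => contains_line (qV B c) (p_of u v e) (q_of w e))
    (fun c => ~ sing_contains_line (qV B c) (p_of u v e) (q_of w e)).
Proof.
move=> single pq_neq0; exists 1; split.
  exists (fun _ => 0); split; last by rewrite meval1 oner_neq0.
  by apply/contains_pq_line; rewrite big1 // => i _; rewrite mul0r.
move=> c /contains_pq_line + [i ci0] _ _.
rewrite (bigD1 i0) //= big1 => [|i' /eqP]; last by rewrite (single i').
by rewrite addr0 => /eqP; rewrite mulf_eq0 (negbTE pq_neq0) orbF -(single i) (negbTE ci0).
Qed.

Lemma part_ii_condition i0 : nonvanishing (pq_polar i0) ->
  exists2 F, nonzero_polyfun F &
    forall e, F e != 0 -> pq_polar i0 e != 0 ->
      generic_in (fun c => contains_line (qV B c) (p_of u v e) (q_of w e))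
        (fun c => ~ sing_contains_line (qV B c) (p_of u v e) (q_of w e)).
Proof.
move=> nv_i0; case: (pickP (fun j => j != i0)) => [j ji|single].
  have [sel [m nv_minor]] := exists_pq_minor_neq0 ji nv_i0.
  exists (pq_minor i0 j sel m); first by split; [apply: polyfun_pq_minor|].
  by move=> e minor_neq0 _; apply: part_ii_of_minor minor_neq0.
exists (fun _ => 1).
  by split; [apply: polyfun_cst | exists (fun _ => 0); rewrite oner_neq0].
by move=> e _; apply: part_ii_of_single => j; apply/eqP/negbFE/single.
Qed.

Definition pq_line_general e :=
  let p := p_of u v e in
  let q := q_of w e in
  \rank (col_mx p q) = 2%N /\
  generic_in (fun _ => True) (fun c : 'I_d -> k => ~ contains_line (qV B c) p q) /\
  generic_in (fun c : 'I_d -> k => contains_line (qV B c) p q)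
    (fun c : 'I_d -> k => ~ sing_contains_line (qV B c) p q).

Lemma generic_pq_line_general : generic_in (fun _ => True) pq_line_general.
Proof.
have [i0 nv_i0] := exists_pq_polar_neq0.
have [F nzF part_ii] := part_ii_condition nv_i0.
have nz_s : nonzero_polyfun (fun e : 'I_4 -> k => e (inord 2)).
  by split; [apply: polyfun_coord | exists (param 0 0 1 0); rewrite /param inordK ?oner_neq0].
apply: (generic_in_polyfun (G := fun e => p_offH e * e (inord 2) * pq_polar i0 e * F e)).
  apply: nonzero_polyfunM nzF; apply: nonzero_polyfunM.
    by apply: nonzero_polyfunM nz_s; split; [apply: polyfun_p_offH | apply: nonvanishing_p_offH].
  by split; [apply: polyfun_pq_polar|].
move=> e; rewrite !mulf_eq0 !negb_or => /andP [/andP [/andP [pH s0] pq_neq0] Fe].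
split; first exact: rank_col_mx_off_hyperplane (p_offH_neq0 pH) (q_of_inH e) (q_of_neq0 s0).
by split; [apply: part_i pq_neq0 | apply: part_ii].
Qed.

End LineThroughLandR.

Theorem lemma5p5 (k : closedFieldType) (char0 : [pchar k] =i pred0)
  (r : nat) (hr : (2 <= r)%N)
  (* the line L spanned by u, v *)
  (u v : 'rV[k]_(r.+1)) (hL : \rank (col_mx u v) = 2%N)
  (* the hyperplane H = {h = 0}, transverse to L (L not contained in H) *)
  (h : 'rV[k]_(r.+1)) (hh : h != 0) (htr : ~~ (inH h u && inH h v))
  (* the rational normal curve R in H *)
  (w : 'I_r -> 'rV[k]_(r.+1)) (hw : row_free (\matrix_(i < r) w i))
  (hwH : forall i, inH h (w i))
  (* V = span of the basis B, a nonzero linear subspace of H^0(I_{L u R}(2)) *)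
  (d : nat) (B : 'I_d -> {mpoly k[r.+1]}) (hd : (0 < d)%N)
  (hB2 : forall i, B i \is 2.-homog)
  (hBL : forall i, contains_line (B i) u v)
  (hBR : forall i (s t : k), ev (B i) (rnc_pt w s t) = 0)
  (hBfree : forall c : 'I_d -> k, qV B c = 0 -> forall i, c i = 0)
  (* (a) *)
  (ha : forall c : 'I_d -> k, (exists i, c i != 0) ->
          ~ reducible_containing_H h (qV B c))
  (* (b) *)
  (hb : generic_in (fun _ => True)
          (fun c : 'I_d -> k => ~ sing_contains_line (qV B c) u v)) :
  generic_in (fun _ => True) (fun e : 'I_4 -> k =>
    let p := p_of u v e in
    let q := q_of w e in
    \rank (col_mx p q) = 2%N /\
    (* (i) *)
    generic_in (fun _ => True)
      (fun c : 'I_d -> k => ~ contains_line (qV B c) p q) /\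
    (* (ii) *)
    generic_in (fun c : 'I_d -> k => contains_line (qV B c) p q)
      (fun c : 'I_d -> k => ~ sing_contains_line (qV B c) p q)).
Proof.
exact: (generic_pq_line_general char0 (ltnW hr) htr hw hwH hB2 hBL hBR hd hBfree hb).
Qed.
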